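(* Let $\boldsymbol\Theta^*\in\mathbb R^{n\times r}$ (rows $\boldsymbol\theta_i^{*T}$) and $\mathbf A^*\in\mathbb R^{p\times r}$ (rows $\mathbf a_j^{*T}$) with $\mathbf M^*=\boldsymbol\Theta^*(\mathbf A^* )^T$, let $\mathbf A\in\mathbb R^{p\times r}$ (rows $\mathbf a_j^T$), fix $i\in[n]$, and suppose $\|\boldsymbol\Theta^*\|_{2\to\infty}\le C_1$, $\|\mathbf A^*\|_{2\to\infty}\le C_2$, $\|\mathbf A\|_{2\to\infty}\le C_2$ and $\sigma_r(\mathcal I_{1,i}(\mathbf A))>0$. If there exists $\xi>0$ such that $$2\sigma_r^{-1}(\mathcal I_{1,i}(\mathbf A))\big\{\|\mathbf Z_{i\cdot}\mathrm{diag}(\boldsymbol\Omega_{i\cdot})\mathbf A\|+\|\mathbf B_{1,i}(\mathbf A)\|+\beta_{1,i}(\mathbf A)\kappa_3(C_2(C_1+\xi))\big\}\le\xi\le\frac{\sigma_r(\mathcal I_{1,i}(\mathbf A))}{2\gamma_{1,i}(\mathbf A)\kappa_3(C_2(C_1+\xi))}$$ (the right-hand side read as $+\infty$ if its denominator is $0$), then there exists $\tilde{\boldsymbol\theta}_i\in\mathbb R^r$ with $\|\tilde{\boldsymbol\theta}_i-\boldsymbol\theta_i^*\|\le\xi$ and $S_{1,i}(\tilde{\boldsymbol\theta}_i;\mathbf A)=\mathbf 0$.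
   Context: Deterministic setting: $\phi>0$; $b:\mathbb R\to\mathbb R$ is three times continuously differentiable with $b''>0$; $y_{ij}\in\mathbb R$ and $\omega_{ij}\in\{0,1\}$ are fixed numbers; $z_{ij}=y_{ij}-b'(m^*_{ij})$, $\mathbf Z_{i\cdot}=(z_{i1},\dots,z_{ip})\in\mathbb R^{1\times p}$, $\mathrm{diag}(\boldsymbol\Omega_{i\cdot})=\mathrm{diag}(\omega_{i1},\dots,\omega_{ip})$. $\kappa_3(\alpha)=\sup_{|x|\le\alpha}|b'''(x)|$. Definitions: $S_{1,i}(\boldsymbol\theta;\mathbf A)=\phi^{-1}\sum_{j=1}^p\omega_{ij}\{y_{ij}-b'(\mathbf a_j^T\boldsymbol\theta)\}\mathbf a_j$; $\mathbf B_{1,i}(\mathbf A)=\sum_{j=1}^p\omega_{ij}b''(m^*_{ij})\mathbf a_j(\mathbf a_j-\mathbf a_j^* )^T\boldsymbol\theta_i^*$; $\mathcal I_{1,i}(\mathbf A)=\sum_{j=1}^p\omega_{ij}b''(m^*_{ij})\mathbf a_j\mathbf a_j^T$; $\beta_{1,i}(\mathbf A)=\sup_{\|\mathbf u\|=1}\sum_j\omega_{ij}((\mathbf a_j-\mathbf a_j^* )^T\boldsymbol\theta_i^* )^2|\mathbf a_j^T\mathbf u|$; $\gamma_{1,i}(\mathbf A)=\sup_{\|\mathbf u\|=1}\sum_j\omega_{ij}|\mathbf a_j^T\mathbf u|^3$. $\sigma_r(\cdot)$ denotes the $r$-th largest singular value; $\|X\|_{2\to\infty}$ the maximal row Euclidean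 norm. *)

From HB Require Import structures.
From mathcomp Require Import all_boot all_order all_algebra.
From mathcomp Require Import all_classical all_reals all_analysis.
Set Implicit Arguments. Unset Strict Implicit. Unset Printing Implicit Defensive.
Import Order.TTheory GRing.Theory Num.Theory.
Local Open Scope ring_scope.
Local Open Scope classical_set_scope.

Section Defs.
Variable R : realType.

Definition fnorm (m c : nat) (M : 'M[R]_(m, c)) : R :=
  Num.sqrt (\sum_(i < m) \sum_(j < c) (M i j) ^+ 2).

Definition norm2inf (m c : nat) (M : 'M[R]_(m, c)) : R :=
  \big[Num.max/0]_(i < m) fnorm (row i M).

(* k-th largest singular value, Courant--Fischer (max-min) definition:
   sigma_k(M) = sup_{dim V = k} inf_{u in V, ||u|| = 1} ||M u|| *)
Definition sing_val (k m c : nat) (M : 'M[R]_(m, c)) : R :=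
  sup [set inf [set fnorm (M *m u) | u in
                  [set u : 'cV[R]_c | (u^T <= V)%MS /\ fnorm u = 1]]
      | V in [set V : 'M[R]_(k, c) | \rank V = k]].

Definition kappa3 (b3 : R -> R) (alpha : R) : R :=
  sup [set `|b3 x| | x in [set x : R | `|x| <= alpha]].

Variables (n p r : nat).

Definition acol (A : 'M[R]_(p, r)) (j : 'I_p) : 'cV[R]_r := (row j A)^T.
Definition thcol (Th : 'M[R]_(n, r)) (i : 'I_n) : 'cV[R]_r := (row i Th)^T.
Definition dotv (x y : 'cV[R]_r) : R := (x^T *m y) 0 0.
Definition Mstar (Th : 'M[R]_(n, r)) (As : 'M[R]_(p, r)) : 'M[R]_(n, p) :=
  Th *m As^T.
Definition omr (Om : 'M[bool]_(n, p)) i j : R := (Om i j)%:R.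

Definition S1 (phi : R) (b1 : R -> R) (Y : 'M[R]_(n, p)) (Om : 'M[bool]_(n, p))
    (i : 'I_n) (th : 'cV[R]_r) (A : 'M[R]_(p, r)) : 'cV[R]_r :=
  phi^-1 *: \sum_(j < p)
     (omr Om i j * (Y i j - b1 (dotv (acol A j) th))) *: acol A j.

Definition Zmat (b1 : R -> R) (Y : 'M[R]_(n, p)) (Th : 'M[R]_(n, r))
    (As : 'M[R]_(p, r)) : 'M[R]_(n, p) :=
  \matrix_(i, j) (Y i j - b1 (Mstar Th As i j)).

Definition ZOA (b1 : R -> R) (Y : 'M[R]_(n, p)) (Om : 'M[bool]_(n, p))
    (Th : 'M[R]_(n, r)) (As A : 'M[R]_(p, r)) (i : 'I_n) : 'rV[R]_r :=
  row i (Zmat b1 Y Th As) *m diag_mx (\row_j omr Om i j) *m A.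

Definition B1 (b2 : R -> R) (Om : 'M[bool]_(n, p)) (Th : 'M[R]_(n, r))
    (As A : 'M[R]_(p, r)) (i : 'I_n) : 'cV[R]_r :=
  \sum_(j < p) (omr Om i j * b2 (Mstar Th As i j)
                 * dotv (acol A j - acol As j) (thcol Th i)) *: acol A j.

Definition I1 (b2 : R -> R) (Om : 'M[bool]_(n, p)) (Th : 'M[R]_(n, r))
    (As A : 'M[R]_(p, r)) (i : 'I_n) : 'M[R]_r :=
  \sum_(j < p) (omr Om i j * b2 (Mstar Th As i j)) *: (acol A j *m (acol A j)^T).

Definition beta1 (Om : 'M[bool]_(n, p)) (Th : 'M[R]_(n, r))
    (As A : 'M[R]_(p, r)) (i : 'I_n) : R :=
  sup [set \sum_(j < p) omr Om i j
             * (dotv (acol A j - acol As j) (thcol Th i)) ^+ 2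
             * `|dotv (acol A j) u|
      | u in [set u : 'cV[R]_r | fnorm u = 1]].

Definition gamma1 (Om : 'M[bool]_(n, p)) (A : 'M[R]_(p, r)) (i : 'I_n) : R :=
  sup [set \sum_(j < p) omr Om i j * `|dotv (acol A j) u| ^+ 3
      | u in [set u : 'cV[R]_r | fnorm u = 1]].

End Defs.

From HB Require Import structures.
From mathcomp Require Import all_boot all_order all_algebra.
From mathcomp Require Import all_classical all_reals all_analysis.
From mathcomp Require Import ring lra.
Import Order.TTheory GRing.Theory Num.Theory numFieldNormedType.Exports.
Set Implicit Arguments. Unset Strict Implicit. Unset Printing Implicit Defensive.
Local Open Scope ring_scope.
Local Open Scope classical_set_scope.

(* Let L(theta) = sum_j omega_ij (y_ij a_j^T theta - b(a_j^T theta)), whose gradient is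
   phi S_{1,i}(theta; A).  By compactness L has a maximiser on the closed ball of radius xi
   around theta_i^*, and a maximiser is a critical point as soon as the gradient does not point
   out of the ball on the boundary sphere: otherwise a short step along the gradient, bent
   towards the centre, would stay in the ball and increase L.  For ||d|| = xi, expanding b'
   to second order around m^*_ij (with |b'''| <= kappa_3(C_2 (C_1 + xi)) on the relevant
   interval) gives
     <grad L(theta_i^* + d), d> = <Z_i diag(Omega_i) A, d> - <B_{1,i}, d> - d^T I_{1,i} d - rem
       <= xi ||Z_i diag(Omega_i) A|| + xi ||B_{1,i}|| - sigma_r xi^2
          + kappa_3 (xi beta_{1,i} + xi^3 gamma_{1,i}),
   which is nonpositive by the two inequalities on xi.  The bound d^T I_{1,i} d >= sigma_r ||d||^2
   holds because I_{1,i} is positive semidefinite: a minimiser of its quadratic form on the unit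
   sphere is an eigenvector, whose eigenvalue dominates the Courant-Fischer value sigma_r. *)

Section EuclideanSums.
Variables (R : realType) (I : finType).
Implicit Types (x y : I -> R) (t : R).

Definition dot x y := \sum_i x i * y i.
Definition sqnorm x := \sum_i x i ^+ 2.

Lemma sqnorm_ge0 x : 0 <= sqnorm x.
Proof. by apply: sumr_ge0 => i _; rewrite sqr_ge0. Qed.

Lemma ler_sqr_sqnorm x i : x i ^+ 2 <= sqnorm x.
Proof. by rewrite /sqnorm (bigD1 i) //= lerDl; apply: sumr_ge0 => j _; rewrite sqr_ge0. Qed.

Lemma sqnorm_eq0 x : sqnorm x = 0 -> forall i, x i = 0.
Proof.
move=> /psumr_eq0P x0 i; apply/eqP; rewrite -sqrf_eq0; apply/eqP.
by apply: x0 => // j _; rewrite sqr_ge0.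
Qed.

Lemma dotC x y : dot x y = dot y x.
Proof. by apply: eq_bigr => i _; rewrite mulrC. Qed.

Lemma dotxx x : dot x x = sqnorm x.
Proof. by apply: eq_bigr => i _; rewrite expr2. Qed.

Lemma sqnormZ t x : sqnorm (fun i => t * x i) = t ^+ 2 * sqnorm x.
Proof. by rewrite /sqnorm mulr_sumr; apply: eq_bigr => i _; rewrite exprMn. Qed.

Lemma sqnormDZ x y t :
  sqnorm (fun i => x i + t * y i) = sqnorm x + 2 * t * dot x y + t ^+ 2 * sqnorm y.
Proof. by rewrite /sqnorm /dot !mulr_sumr -!big_split; apply: eq_bigr => i _ /=; ring. Qed.

Lemma dotDZr x y z t : dot x (fun i => y i + t * z i) = dot x y + t * dot x z.
Proof. by rewrite /dot mulr_sumr -big_split; apply: eq_bigr => i _ /=; ring. Qed.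

Lemma dotBr x y z : dot x (fun i => y i - z i) = dot x y - dot x z.
Proof. by rewrite /dot -sumrB; apply: eq_bigr => i _; rewrite mulrBr. Qed.

Lemma dotDr x y z : dot x (fun i => y i + z i) = dot x y + dot x z.
Proof. by rewrite /dot -big_split; apply: eq_bigr => i _; rewrite mulrDr. Qed.

Lemma dotZr x y t : dot x (fun i => t * y i) = t * dot x y.
Proof. by rewrite /dot mulr_sumr; apply: eq_bigr => i _ /=; ring. Qed.

Lemma abs_le_sqnorm x i rho : 0 <= rho -> sqnorm x <= rho ^+ 2 -> `|x i| <= rho.
Proof.
move=> rho0 x_rho; rewrite -(ger0_norm rho0) -ler_sqr ?nnegrE // !real_normK ?num_real //.
exact: le_trans (ler_sqr_sqnorm x i) x_rho.
Qed.

Lemma cauchy_schwarz x y : dot x y ^+ 2 <= sqnorm x * sqnorm y.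
Proof.
have [x0|xn0] := eqVneq (sqnorm x) 0.
  by rewrite /dot big1 ?expr0n ?x0 ?mul0r // => i _; rewrite (sqnorm_eq0 x0) mul0r.
have xpos : 0 < sqnorm x by rewrite lt_neqAle eq_sym xn0 sqnorm_ge0.
(* evaluate the nonnegative quadratic t |-> sqnorm (y + t x) at its minimiser *)
have := sqnorm_ge0 (fun i => y i + (- dot x y / sqnorm x) * x i).
rewrite sqnormDZ (dotC y x).
set d := dot x y; set s := sqnorm x.
have -> : sqnorm y + 2 * (- d / s) * d + (- d / s) ^+ 2 * s = sqnorm y - d ^+ 2 / s.
  by field.
by rewrite subr_ge0 ler_pdivrMr // mulrC.
Qed.

Lemma cauchy_schwarz_sqrt x y :
  `|dot x y| <= Num.sqrt (sqnorm x) * Num.sqrt (sqnorm y).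
Proof.
rewrite -sqrtrM ?sqnorm_ge0 // -sqrtr_sqr ler_sqrt ?cauchy_schwarz //.
by rewrite mulr_ge0 ?sqnorm_ge0.
Qed.

End EuclideanSums.

Section RealFunctions.
Variable R : realType.

Lemma is_derive0_gt0_increasing (g : R -> R) (d : R) :
  is_derive (0 : R) 1 g d -> 0 < d -> exists2 e : R, 0 < e & forall h, 0 < h < e -> g 0 < g h.
Proof.
move=> [dg dv] d0.
have : (fun h : R => h^-1 *: ((g \o shift 0) (h *: 1) - g 0)) @ 0^' --> d.
  by rewrite -dv; apply: dg.
move=> /cvgr_gt /(_ 0 d0) /nbhs_ballP [e e0 He]; exists e => // h /andP[h0 he].
have := He h; rewrite /ball /= sub0r normrN gtr0_norm // => /(_ he).
move=> /(_ (lt0r_neq0 h0)) /=.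
by rewrite addr0 scaler1 -[_ *: _]/(_ * _) pmulr_rgt0 ?invr_gt0 // subr_gt0.
Qed.

Lemma is_derive_comp_affine (f df : R -> R) (c d : R) :
  (forall x : R, is_derive x 1 f (df x)) ->
  is_derive (0 : R) 1 (fun t => f (c + t * d)) (df c * d).
Proof.
move=> Hf.
have Hu : is_derive (0 : R) 1 (fun t : R => c + t * d) d.
  rewrite (_ : (fun t => c + t * d) = cst c + d \*: (@id R)); last first.
    by apply/funext => t /=; rewrite mulrC.
  have := is_deriveD (is_derive_cst c (0 : R) 1) (is_deriveZ d (is_derive_id (0 : R) 1)).
  by rewrite add0r scaler1.
have := @is_derive1_comp _ f (fun t => c + t * d) 0 _ _ (Hf (c + 0 * d)) Hu.
by rewrite mul0r addr0.
Qed.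

Lemma is_derive_continuous (f df : R -> R) :
  (forall x : R, is_derive x 1 f (df x)) -> continuous f.
Proof.
by move=> Hf x; apply/differentiable_continuous/derivable1_diffP; case: (Hf x).
Qed.

Lemma MVT_between (g dg : R -> R) (x m : R) :
  (forall t : R, is_derive t 1 g (dg t)) ->
  exists c, ((m <= c <= x) \/ (x <= c <= m)) /\ g x - g m = dg c * (x - m).
Proof.
move=> Hg.
have cg a b : {within `[a, b], continuous g}.
  exact/continuous_subspaceT/(is_derive_continuous Hg).
have [mx|xm] := leP m x.
  have [c + E] := MVT_segment mx (fun t _ => Hg t) (cg m x).
  by rewrite in_itv /= => cmx; exists c; split; [left|].
have [c + E] := MVT_segment (ltW xm) (fun t _ => Hg t) (cg x m).
rewrite in_itv /= => cxm; exists c; split; first by right.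
by rewrite -opprB E -mulrN opprB.
Qed.

Section Taylor.
Variables (f1 f2 f3 : R -> R) (K a : R).
Hypothesis d1 : forall t : R, is_derive t 1 f1 (f2 t).
Hypothesis d2 : forall t : R, is_derive t 1 f2 (f3 t).
Hypothesis f3K : forall t, `|t| <= a -> `|f3 t| <= K.

Lemma lipschitz_is_derive (u v : R) :
  `|u| <= a -> `|v| <= a -> `|f2 u - f2 v| <= K * `|u - v|.
Proof.
move=> ua va; have [c [cuv ->]] := MVT_between u v d2.
rewrite normrM ler_wpM2r // f3K //.
move: ua va; rewrite !ler_norml => /andP[? ?] /andP[? ?].
by apply/andP; case: cuv => /andP[? ?]; split; lra.
Qed.

Lemma is_derive_tangent_gap (m L t : R) :
  is_derive t 1 (fun s => f1 s - f2 m * s - L * ((s - m) * (s - m)))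
    (f2 t - f2 m - L * (2 * (t - m))).
Proof.
have Dl := is_deriveZ (f2 m) (is_derive_id t 1).
have Dsm := is_deriveB (is_derive_id t 1) (is_derive_cst m t 1).
have := is_deriveB (is_deriveB (d1 t) Dl) (is_deriveZ L (is_deriveM Dsm Dsm)).
rewrite (_ : f1 - _ - _ = fun s => f1 s - f2 m * s - L * ((s - m) * (s - m))) //.
move/is_derive_eq; apply; rewrite /GRing.scale /= !mulr1 subr0.
rewrite (_ : (id - cst m) t = t - m) //; ring.
Qed.

Lemma taylor_remainder_le (x m : R) :
  `|x| <= a -> `|m| <= a -> `|f1 x - f1 m - f2 m * (x - m)| <= K / 2 * (x - m) ^+ 2.
Proof.
move=> xa ma.
have K0 : 0 <= K by apply: le_trans (f3K (le_trans _ ma)); rewrite ?normr0.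
(* MVT for f1 minus its tangent at m minus L (s - m)^2, used with L = -K/2 and L = K/2 *)
have mvt L : exists c, ((m <= c <= x) \/ (x <= c <= m)) /\
    f1 x - f1 m - f2 m * (x - m) - L * (x - m) ^+ 2
    = (f2 c - f2 m) * (x - m) - 2 * L * ((c - m) * (x - m)).
  have [c [cmx E]] := MVT_between x m (is_derive_tangent_gap m L).
  exists c; split => //.
  rewrite (_ : _ - _ * (x - m) ^+ 2 = (f1 x - f2 m * x - L * ((x - m) * (x - m)))
            - (f1 m - f2 m * m - L * ((m - m) * (m - m)))); last by ring.
  by rewrite E; ring.
have gap_le c : ((m <= c <= x) \/ (x <= c <= m)) ->
    `|(f2 c - f2 m) * (x - m)| <= K * ((c - m) * (x - m)).
  move=> cmx; rewrite normrM.
  have cm_xm : `|c - m| * `|x - m| = (c - m) * (x - m).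
    by rewrite -normrM ger0_norm //; case: cmx => /andP[? ?]; nra.
  rewrite -cm_xm mulrA ler_wpM2r // lipschitz_is_derive //.
  move: xa ma; rewrite !ler_norml => /andP[? ?] /andP[? ?].
  by apply/andP; case: cmx => /andP[? ?]; split; lra.
rewrite ler_norml; apply/andP; split.
  have [c [cmx E]] := mvt (- (K / 2)); have := gap_le c cmx.
  rewrite ler_norml => /andP[+ _]; nra.
have [c [cmx E]] := mvt (K / 2); have := gap_le c cmx.
rewrite ler_norml => /andP[_ +]; nra.
Qed.

End Taylor.

Lemma quadratic_le_near0 (c w D : R) : 0 <= w -> 0 <= D -> (0 < D \/ c < 0) ->
  exists2 e : R, 0 < e & forall t, 0 < t < e -> 2 * t * c + t ^+ 2 * w <= D.
Proof.
move=> w0 D0 [Dp|cn].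
  have cw : 0 < 2 * `|c| + w + 1 by have := normr_ge0 c; lra.
  exists (Num.min 1 (D / (2 * `|c| + w + 1))); first by rewrite lt_min ltr01 divr_gt0.
  move=> t /andP[t0]; rewrite lt_min => /andP[t1]; rewrite ltr_pdivlMr // => tD.
  have : t ^+ 2 * w <= t * w.
    by rewrite expr2 -mulrA ler_piMl ?mulr_ge0 ?(ltW t0) ?(ltW t1).
  have := ler_norm c; nra.
exists (- 2 * c / (w + 1)); first by rewrite divr_gt0 //; lra.
move=> t /andP[t0]; rewrite ltr_pdivlMr; last by lra.
nra.
Qed.

Lemma linear_coef_eq0 (c d : R) : (forall t, 0 <= 2 * t * c + t ^+ 2 * d) -> c = 0.
Proof.
move=> H; pose e := (`|d| + 1)^-1.
have d1 : 0 < `|d| + 1 by have := normr_ge0 d; lra.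
have e0 : 0 < e by rewrite invr_gt0.
have ed : e * d < 1.
  by rewrite /e mulrC ltr_pdivrMr // mul1r; have := ler_norm d; lra.
(* at t = - c e the quadratic equals c^2 e (e d - 2), with e (e d - 2) < 0 *)
have := H (- c * e); rewrite (_ : _ + _ = c ^+ 2 * (e * (e * d - 2))); last by ring.
rewrite nmulr_lge0; last by rewrite pmulr_rlt0 //; lra.
by move=> c2; apply/eqP; rewrite -sqrf_eq0 eq_le c2 sqr_ge0.
Qed.

End RealFunctions.

Section RowVectorExtrema.
Variable R : realType.

Lemma continuous_sum (T : topologicalType) n (F : 'I_n -> T -> R) :
  (forall j, continuous (F j)) -> continuous (fun x => \sum_(j < n) F j x).
Proof.
move=> cF; rewrite (_ : (fun x => _) = \sum_(j < n) F j); last first.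
  by apply/funext => x; rewrite fct_sumE.
apply: (big_ind (fun f : T -> R => continuous f)) => [|f g cf cg x|j _].
- exact: cst_continuous.
- exact: (continuousD (cf x) (cg x)).
- exact: cF.
Qed.

Lemma row_of_funK n (f : 'I_n -> R) : (\row_k f k) 0 = f.
Proof. by apply/funext => k; rewrite mxE. Qed.

Lemma continuous_dot_row n (a : 'I_n -> R) : continuous (fun x : 'rV[R]_n => dot a (x 0)).
Proof.
apply: continuous_sum => k x; apply: continuousM; first exact: cst_continuous.
exact: coord_continuous.
Qed.

Lemma continuous_sqnorm_row_sub n (c : 'I_n -> R) :
  continuous (fun x : 'rV[R]_n => sqnorm (fun k => x 0 k - c k)).
Proof.
apply: continuous_sum => k x.
have cxk : {for x, continuous (fun y : 'rV[R]_n => y 0 k - c k)}.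
  by apply: continuousB; [exact: coord_continuous | exact: cst_continuous].
exact: (continuousM cxk cxk).
Qed.

Lemma closed_le_continuous (T : topologicalType) (f : T -> R) (a : R) :
  continuous f -> closed [set x | f x <= a].
Proof.
move=> cf; have := @preimage_closed T R f [set y | y <= a].
by apply; [move=> x _; exact: cf | exact: closed_le].
Qed.

Lemma closed_eq_continuous (T : topologicalType) (f : T -> R) (a : R) :
  continuous f -> closed [set x | f x = a].
Proof.
move=> cf; have := @preimage_closed T R f [set y | y = a].
by apply; [move=> x _; exact: cf | exact: closed_eq].
Qed.

Lemma rV_bounded_closed_argmax n (F : 'rV[R]_n -> R) (A : set 'rV[R]_n) (B : R) (x1 : 'rV[R]_n) :
  0 <= B -> continuous F -> closed A -> (forall x, A x -> forall k, `|x 0 k| <= B) -> A x1 ->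
  exists2 x0, A x0 & forall x, A x -> F x <= F x0.
Proof.
move=> B0 cF cA AB Ax1.
have bA : bounded_set A.
  exists B; split; first exact: num_real.
  move=> M BM x Ax /=; rewrite [leLHS]/Num.norm /= mx_normrE.
  apply: bigmax_le => [|[a k] _]; first by apply: ltW; apply: le_lt_trans BM.
  by rewrite (ord1 a); apply: ltW; apply: le_lt_trans BM; exact: AB.
have [x0 + Hx0] := EVT_max_rV (ex_intro _ x1 Ax1) (bounded_closed_compact bA cA)
  (continuous_subspaceT cF).
by rewrite inE => Ax0; exists x0 => // x Ax; apply: Hx0; rewrite inE.
Qed.

Lemma sqnorm_ball_argmax n (F : 'rV[R]_n -> R) (c : 'I_n -> R) (rho : R) :
  0 <= rho -> continuous F ->
  exists2 x0 : 'rV[R]_n, sqnorm (fun k => x0 0 k - c k) <= rho ^+ 2 &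
    forall x : 'rV[R]_n, sqnorm (fun k => x 0 k - c k) <= rho ^+ 2 -> F x <= F x0.
Proof.
move=> rho0 cF.
pose B := rho + \sum_l `|c l|.
have B0 : 0 <= B by rewrite addr_ge0 // sumr_ge0 // => l _; exact: normr_ge0.
apply: (rV_bounded_closed_argmax (x1 := \row_k c k) B0 cF).
- exact/closed_le_continuous/continuous_sqnorm_row_sub.
- move=> x xc k.
  have xck : `|x 0 k - c k| <= rho by exact: (abs_le_sqnorm k rho0 xc).
  have ck : `|c k| <= \sum_l `|c l|.
    by rewrite (bigD1 k) //= lerDl sumr_ge0 // => l _; exact: normr_ge0.
  have := ler_normD (x 0 k - c k) (c k); rewrite subrK /B; lra.
- by rewrite /sqnorm big1 ?exprn_ge0 // => k _; rewrite mxE subrr expr0n.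
Qed.

End RowVectorExtrema.

Section QuadraticForm.
Variables (R : realType) (p r : nat) (A : 'M[R]_(p, r)) (c : 'I_p -> R).
Hypothesis c_ge0 : forall j, 0 <= c j.
Implicit Types (f g h : 'I_r -> R) (t : R).

Lemma sum_dot_rows (a : 'I_p -> R) f :
  \sum_j a j * dot (A j) f = dot (fun k => \sum_j a j * A j k) f.
Proof.
rewrite /dot; under [RHS]eq_bigr do rewrite mulr_suml.
rewrite exchange_big /=; apply: eq_bigr => j _.
by rewrite mulr_sumr; apply: eq_bigr => k _; rewrite mulrA.
Qed.

Definition qform f := \sum_j c j * dot (A j) f ^+ 2.
Definition qmul f k := \sum_j c j * A j k * dot (A j) f.

Lemma qform_ge0 f : 0 <= qform f.
Proof. by apply: sumr_ge0 => j _; rewrite mulr_ge0 ?sqr_ge0. Qed.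

Lemma qformZ f t : qform (fun k => t * f k) = t ^+ 2 * qform f.
Proof. by rewrite /qform mulr_sumr; apply: eq_bigr => j _; rewrite dotZr; ring. Qed.

Lemma dot_qmul f g : dot g (qmul f) = \sum_j c j * dot (A j) f * dot (A j) g.
Proof.
rewrite {1}/dot /qmul; under eq_bigr do rewrite mulr_sumr.
rewrite exchange_big /=; apply: eq_bigr => j _.
by rewrite [dot (A j) g]/dot mulr_sumr; apply: eq_bigr => k _; ring.
Qed.

Lemma qformDZ f g t :
  qform (fun k => f k + t * g k) = qform f + 2 * t * dot g (qmul f) + t ^+ 2 * qform g.
Proof.
rewrite dot_qmul /qform !mulr_sumr -!big_split; apply: eq_bigr => j _ /=.
by rewrite dotDZr; ring.
Qed.

Lemma qform_sphere_min : (0 < r)%N ->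
  exists2 g, sqnorm g = 1 & forall f, qform g * sqnorm f <= qform f.
Proof.
move=> r_gt0; pose k0 := Ordinal r_gt0.
pose S := [set x : 'rV[R]_r | sqnorm (x 0) = 1].
have cS : closed S.
  apply: closed_eq_continuous.
  rewrite (_ : (fun x => _) = fun x : 'rV[R]_r => sqnorm (fun k => x 0 k - 0)).
    exact: continuous_sqnorm_row_sub.
  by apply/funext => x; congr sqnorm; apply/funext => k; rewrite subr0.
have cQ : continuous (fun x : 'rV[R]_r => - qform (x 0)).
  move=> x; apply: continuousN; move: x; apply: continuous_sum => j x /=.
  have cd : {for x, continuous (fun y : 'rV[R]_r => dot (A j) (y 0))}.
    exact: continuous_dot_row.
  exact: (continuousM (@cst_continuous _ _ (c j) x) (continuousM cd cd)).
have S_bounded x : S x -> forall k, `|x 0 k| <= 1.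
  by move=> Sx k; apply: abs_le_sqnorm => //; rewrite Sx expr1n.
have S_e0 : S (\row_k (k == k0)%:R).
  rewrite /S /= /sqnorm (bigD1 k0) //= big1 ?mxE ?eqxx ?addr0 ?expr1n //.
  by move=> k /negPf k_k0; rewrite mxE k_k0 expr0n.
have [x0 Sx0 x0max] := rV_bounded_closed_argmax ler01 cQ cS S_bounded S_e0.
exists (x0 0) => // f.
have [f0|fn0] := eqVneq (sqnorm f) 0; first by rewrite f0 mulr0 qform_ge0.
pose a := (Num.sqrt (sqnorm f))^-1.
have a2f : a ^+ 2 * sqnorm f = 1.
  by rewrite /a exprVn sqr_sqrtr ?sqnorm_ge0 // mulVf.
have := x0max (\row_k (a * f k)); rewrite /S /= lerN2 row_of_funK.
rewrite sqnormZ qformZ a2f => /(_ erefl) /(ler_wpM2r (sqnorm_ge0 f)).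
by rewrite mulrAC a2f mul1r.
Qed.

Lemma qform_sphere_min_eigen g : sqnorm g = 1 ->
  (forall f, qform g * sqnorm f <= qform f) -> forall k, qmul g k = qform g * g k.
Proof.
move=> g1 gmin; set m := qform g.
(* g minimises the Rayleigh quotient, so its first variation vanishes in every direction *)
have crit h : dot h (qmul g) = m * dot g h.
  apply/eqP; rewrite -subr_eq0; apply/eqP.
  apply: (@linear_coef_eq0 _ _ (qform h - m * sqnorm h)) => t.
  have := gmin (fun k => g k + t * h k); rewrite qformDZ sqnormDZ g1 -/m -subr_ge0.
  by congr (_ <= _); ring.
pose w k := qmul g k - m * g k.
have w0 : sqnorm w = 0.
  transitivity (dot w (qmul g) - m * dot g w); last by rewrite crit subrr.
  by rewrite /sqnorm /dot mulr_sumr -sumrB; apply: eq_bigr => k _; rewrite /w; ring.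
by move=> k; apply/eqP; rewrite -subr_eq0 -/(w k) (sqnorm_eq0 w0).
Qed.

Lemma qform_ge_gain (s : R) :
  (forall f, sqnorm f = 1 -> s <= Num.sqrt (sqnorm (qmul f))) ->
  forall f, s * sqnorm f <= qform f.
Proof.
move=> gain f; have [r0|r_gt0] := posnP r.
  by rewrite /sqnorm big1 ?mulr0 ?qform_ge0 // => -[k kr] _; exfalso; rewrite r0 in kr.
have [g g1 gmin] := qform_sphere_min r_gt0.
have sqnorm_qmul : sqnorm (qmul g) = qform g ^+ 2.
  rewrite (_ : qmul g = fun k => qform g * g k); last first.
    exact/funext/(qform_sphere_min_eigen g1 gmin).
  by rewrite sqnormZ g1 mulr1.
have := gain g g1; rewrite sqnorm_qmul sqrtr_sqr ger0_norm ?qform_ge0 // => sm.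
exact: le_trans (ler_wpM2r (sqnorm_ge0 f) sm) (gmin f).
Qed.

End QuadraticForm.

Section BallMaximum.
Variables (R : realType) (r : nat) (L : ('I_r -> R) -> R) (G : ('I_r -> R) -> 'I_r -> R).
Variables (c : 'I_r -> R) (rho : R).
Hypothesis rho_gt0 : 0 < rho.
Hypothesis L_cont : continuous (fun x : 'rV[R]_r => L (x 0)).
Hypothesis L_grad : forall g v : 'I_r -> R,
  is_derive (0 : R) 1 (fun t => L (fun k => g k + t * v k)) (dot (G g) v).

Lemma ball_argmax_ascent g v :
  sqnorm (fun k => g k - c k) <= rho ^+ 2 ->
  (forall h, sqnorm (fun k => h k - c k) <= rho ^+ 2 -> L h <= L g) ->
  0 < dot (G g) v ->
  sqnorm (fun k => g k - c k) = rho ^+ 2 /\ 0 <= dot (fun k => g k - c k) v.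
Proof.
set d := fun k => g k - c k => g_ball g_max Gv.
have ascent : 0 < rho ^+ 2 - sqnorm d \/ dot d v < 0 -> False.
  move=> inward.
  have [e1 e1_gt0 Lup] := is_derive0_gt0_increasing (L_grad g v) Gv.
  have D_ge0 : 0 <= rho ^+ 2 - sqnorm d by rewrite subr_ge0.
  have [e2 e2_gt0 in_ball] := quadratic_le_near0 (sqnorm_ge0 v) D_ge0 inward.
  pose t := Num.min e1 e2 / 2.
  have t_gt0 : 0 < t by rewrite divr_gt0 // lt_min e1_gt0.
  have : t < Num.min e1 e2 by rewrite ltr_pdivrMr // ltr_pMr ?ltr1n // lt_min e1_gt0.
  rewrite lt_min => /andP[te1 te2].
  have step_in : sqnorm (fun k => g k + t * v k - c k) <= rho ^+ 2.
    rewrite (_ : (fun k => _ - c k) = fun k => d k + t * v k); last first.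
      by apply/funext => k; rewrite /d addrAC.
    by rewrite sqnormDZ; have := in_ball t; rewrite t_gt0 te2 => /(_ isT); lra.
  have := Lup t; rewrite t_gt0 te1 => /(_ isT).
  rewrite (_ : (fun k => g k + 0 * v k) = g); last by apply/funext => k; rewrite mul0r addr0.
  by rewrite ltNge g_max.
split; last by rewrite leNgt; apply/negP => dv; apply: ascent; right.
apply/eqP; rewrite eq_le g_ball /= leNgt; apply/negP => d_lt.
by apply: ascent; left; rewrite subr_gt0.
Qed.

Lemma ball_argmax_stationary :
  (forall d, sqnorm d = rho ^+ 2 -> dot (G (fun k => c k + d k)) d <= 0) ->
  exists2 g, sqnorm (fun k => g k - c k) <= rho ^+ 2 & forall k, G g k = 0.
Proof.
move=> inward_grad.
have [x0 x0_ball x0_max] := sqnorm_ball_argmax c (ltW rho_gt0) L_cont.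
set g := x0 0 in x0_ball *; set d := fun k => g k - c k.
have g_max h : sqnorm (fun k => h k - c k) <= rho ^+ 2 -> L h <= L g.
  by move=> h_ball; have := x0_max (\row_k h k); rewrite row_of_funK; apply.
exists g => //; apply: sqnorm_eq0; apply/eqP; rewrite eq_le sqnorm_ge0 andbT leNgt.
apply/negP => G_gt0.
have G_ascent : 0 < dot (G g) (G g) by rewrite dotxx.
have [d_bd _] := ball_argmax_ascent x0_ball g_max G_ascent.
have dG : dot (G g) d <= 0.
  by rewrite -[g in G g](_ : (fun k => c k + d k) = g) ?inward_grad //;
    apply/funext => k; rewrite /d addrC subrK.
(* on the sphere, G g - d is an ascent direction that points strictly inwards *)
have bent_ascent : 0 < dot (G g) (fun k => G g k - d k) by rewrite dotBr dotxx; lra.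
have [_] := ball_argmax_ascent x0_ball g_max bent_ascent.
rewrite dotBr dotxx -/d d_bd dotC; have := exprn_gt0 2 rho_gt0; lra.
Qed.

End BallMaximum.

Section MatrixCoordinates.
Variable R : realType.

Lemma fnorm_row_sqnorm (m c : nat) (M : 'M[R]_(m, c)) j :
  fnorm (row j M) = Num.sqrt (sqnorm (M j)).
Proof. by rewrite /fnorm big_ord1; congr Num.sqrt; apply: eq_bigr => k _; rewrite mxE. Qed.

Lemma fnorm_col_sqnorm (c : nat) (u : 'cV[R]_c) : fnorm u = Num.sqrt (sqnorm (u^~ 0)).
Proof. by rewrite /fnorm; congr Num.sqrt; apply: eq_bigr => k _; rewrite big_ord1. Qed.

Lemma fnorm_rV_sqnorm (c : nat) (v : 'rV[R]_c) : fnorm v = Num.sqrt (sqnorm (v 0)).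
Proof. by rewrite /fnorm big_ord1. Qed.

Lemma norm2inf_ge0 (m c : nat) (M : 'M[R]_(m, c)) : 0 <= norm2inf M.
Proof. exact: bigmax_ge_id. Qed.

Lemma sqnorm_row_le_norm2inf (m c : nat) (M : 'M[R]_(m, c)) j :
  Num.sqrt (sqnorm (M j)) <= norm2inf M.
Proof. by rewrite -fnorm_row_sqnorm; exact: le_bigmax. Qed.

Lemma sing_val_le (c : nat) (M : 'M[R]_c) (u : 'cV[R]_c) :
  fnorm u = 1 -> sing_val c M <= fnorm (M *m u).
Proof.
move=> u1; apply: ge_sup; first by exists (inf [set fnorm (M *m v) | v in
  [set v : 'cV[R]_c | (v^T <= 1%:M)%MS /\ fnorm v = 1]]), 1%:M; rewrite //= mxrank1.
move=> y [V /= rV <-]; apply: ge_inf.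
  by exists 0 => z [v _ <-]; exact: sqrtr_ge0.
by exists u => //; split => //; apply: submx_full; rewrite /row_full rV.
Qed.

Lemma dotvE (r : nat) (x y : 'cV[R]_r) : dotv x y = dot (x^~ 0) (y^~ 0).
Proof. by rewrite /dotv !mxE; apply: eq_bigr => k _; rewrite mxE. Qed.

Lemma col_of_funK (c : nat) (f : 'I_c -> R) : (\col_k f k)^~ 0 = f.
Proof. by apply/funext => k; rewrite mxE. Qed.

Lemma dotv_acol (p r : nat) (A : 'M[R]_(p, r)) j (u : 'cV[R]_r) :
  dotv (acol A j) u = dot (A j) (u^~ 0).
Proof. by rewrite dotvE; congr dot; apply/funext => k; rewrite !mxE. Qed.

End MatrixCoordinates.

Lemma radius_conditions_le (R : realType) (sr Z B beta gamma K xi : R) :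
  0 < sr -> 0 < xi ->
  2 * sr^-1 * (Z + B + beta * K) <= xi ->
  (2 * gamma * K = 0 \/ xi <= sr / (2 * gamma * K)) ->
  xi * (Z + B) + K * (xi * beta + xi ^+ 3 * gamma) <= sr * xi ^+ 2.
Proof.
move=> sr_gt0 xi_gt0 small_bias small_curv.
have sr2 : 0 <= sr / 2 by rewrite divr_ge0 ?ltW.
have lin : Z + B + beta * K <= xi * (sr / 2).
  rewrite (_ : Z + B + beta * K = 2 * sr^-1 * (Z + B + beta * K) * (sr / 2)).
    exact: ler_wpM2r.
  by field; rewrite gt_eqF.
have cubic : gamma * K * xi <= sr / 2.
  have [gK_le0|gK_gt0] := leP (gamma * K) 0.
    by rewrite (le_trans _ sr2) // pmulr_lle0.
  case: small_curv => [|xi_le]; first by rewrite -mulrA; nra.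
  rewrite ler_pdivlMr in xi_le; last by rewrite -mulrA mulr_gt0.
  nra.
have := ler_wpM2l (ltW xi_gt0) lin; have := ler_wpM2l (ltW (exprn_gt0 2 xi_gt0)) cubic.
rewrite !expr2 exprS expr2; nra.
Qed.

Section ScoreEquation.
Variables (R : realType) (n p r : nat) (phi : R) (b b1 b2 b3 : R -> R).
Variables (Y : 'M[R]_(n, p)) (Om : 'M[bool]_(n, p)) (Th : 'M[R]_(n, r)).
Variables (As A : 'M[R]_(p, r)) (i : 'I_n) (C1 C2 xi : R).
Hypothesis b_b1 : forall x : R, is_derive x 1 b (b1 x).
Hypothesis b1_b2 : forall x : R, is_derive x 1 b1 (b2 x).
Hypothesis b2_b3 : forall x : R, is_derive x 1 b2 (b3 x).
Hypothesis b3_cont : continuous b3.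
Hypothesis b2_gt0 : forall x : R, 0 < b2 x.
Hypothesis Th_le : norm2inf Th <= C1.
Hypothesis As_le : norm2inf As <= C2.
Hypothesis A_le : norm2inf A <= C2.
Hypothesis xi_gt0 : 0 < xi.

Local Notation w j := (omr R Om i j).
Local Notation m j := (Mstar Th As i j).

Definition loglik (f : 'I_r -> R) := \sum_j w j * (Y i j * dot (A j) f - b (dot (A j) f)).
Definition score (f : 'I_r -> R) k := \sum_j w j * (Y i j - b1 (dot (A j) f)) * A j k.
Definition bias j := dot (fun k => A j k - As j k) (Th i).
Definition curv j := w j * b2 (m j).
Definition kappa := kappa3 b3 (C2 * (C1 + xi)).

Lemma w_ge0 j : 0 <= w j.
Proof. by rewrite /omr ler0n. Qed.

Lemma curv_ge0 j : 0 <= curv j.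
Proof. by rewrite mulr_ge0 ?w_ge0 ?ltW. Qed.

Lemma dot_score f v :
  dot (score f) v = \sum_j w j * (Y i j - b1 (dot (A j) f)) * dot (A j) v.
Proof. by rewrite sum_dot_rows. Qed.

Lemma loglik_grad g v :
  is_derive (0 : R) 1 (fun t => loglik (fun k => g k + t * v k)) (dot (score g) v).
Proof.
pose ell j x := w j * (Y i j * x - b x).
have ell' j (x : R) : is_derive x 1 (ell j) (w j * (Y i j - b1 x)).
  rewrite (_ : ell j = w j \*: (Y i j \*: id - b)) //.
  have := is_deriveZ (w j) (is_deriveB (is_deriveZ (Y i j) (is_derive_id x 1)) (b_b1 x)).
  by move/is_derive_eq; apply; rewrite /GRing.scale /= mulr1.
rewrite dot_score (_ : (fun t => _) = \sum_j (fun t => ell j (dot (A j) g + t * dot (A j) v))).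
  by apply: is_derive_sum => j; exact: (is_derive_comp_affine _ _ (ell' j)).
by apply/funext => t; rewrite fct_sumE; apply: eq_bigr => j _; rewrite dotDZr.
Qed.

Lemma continuous_loglik : continuous (fun x : 'rV[R]_r => loglik (x 0)).
Proof.
have cb := is_derive_continuous b_b1.
apply: continuous_sum => j x /=.
have cd : {for x, continuous (fun y : 'rV[R]_r => dot (A j) (y 0))}.
  exact: continuous_dot_row.
apply: (continuousM (@cst_continuous _ _ (w j) x)).
apply: continuousB; first exact: (continuousM (@cst_continuous _ _ (Y i j) x) cd).
exact: (continuous_comp cd (cb _)).
Qed.

Lemma C2_ge0 : 0 <= C2.
Proof. exact: le_trans (norm2inf_ge0 A) A_le. Qed.

Lemma Mstar_dot j : m j = dot (Th i) (As j).
Proof. by rewrite !mxE; apply: eq_bigr => k _; rewrite mxE. Qed.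

Lemma dot_row_theta j : dot (A j) (Th i) = m j + bias j.
Proof. by rewrite Mstar_dot dotC /bias /dot -big_split; apply: eq_bigr => k _ /=; ring. Qed.

Lemma abs_dot_row_le j f : `|dot (A j) f| <= C2 * Num.sqrt (sqnorm f).
Proof.
apply: le_trans (cauchy_schwarz_sqrt _ _) _; rewrite ler_wpM2r ?sqrtr_ge0 //.
exact: le_trans (sqnorm_row_le_norm2inf A j) A_le.
Qed.

Lemma sqnorm_theta_le : Num.sqrt (sqnorm (Th i)) <= C1.
Proof. exact: le_trans (sqnorm_row_le_norm2inf Th i) Th_le. Qed.

Lemma abs_Mstar_le j : `|m j| <= C2 * C1.
Proof.
rewrite Mstar_dot mulrC; apply: le_trans (cauchy_schwarz_sqrt _ _) _.
rewrite ler_pM ?sqrtr_ge0 ?sqnorm_theta_le //.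
exact: le_trans (sqnorm_row_le_norm2inf As j) As_le.
Qed.

Lemma abs_b3_le_kappa t : `|t| <= C2 * (C1 + xi) -> `|b3 t| <= kappa.
Proof.
move=> t_le; have alpha_ge0 : 0 <= C2 * (C1 + xi) := le_trans (normr_ge0 t) t_le.
have abs_b3_cont : continuous (fun x : R => `|b3 x|).
  by move=> x; apply: continuous_comp; [exact: b3_cont | exact: norm_continuous].
have interval : - (C2 * (C1 + xi)) <= C2 * (C1 + xi) by lra.
have [c _ c_max] := EVT_max interval (continuous_subspaceT abs_b3_cont).
apply: sup_upper_bound; last by exists t.
split; first by exists `|b3 t|, t.
exists `|b3 c| => _ [x x_le <-]; apply: c_max.
by rewrite in_itv /= -ler_norml.
Qed.

Lemma dotv_bias j : dotv (acol A j - acol As j) (thcol Th i) = bias j.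
Proof. by rewrite dotvE; congr dot; apply/funext => k; rewrite !mxE. Qed.

Lemma beta1_ge f : sqnorm f = 1 ->
  \sum_j w j * bias j ^+ 2 * `|dot (A j) f| <= beta1 Om Th As A i.
Proof.
move=> f1; have u1 : fnorm (\col_k f k) = 1.
  by rewrite fnorm_col_sqnorm col_of_funK f1 sqrtr1.
apply: sup_upper_bound; last first.
  by exists (\col_k f k) => //; apply: eq_bigr => j _; rewrite dotv_bias dotv_acol col_of_funK.
split; first by eexists; exists (\col_k f k).
exists (\sum_j w j * bias j ^+ 2 * C2) => y [v /= v1 <-].
apply: ler_sum => j _; rewrite dotv_bias dotv_acol.
apply: ler_wpM2l; first by rewrite mulr_ge0 ?w_ge0 ?sqr_ge0.
by have := abs_dot_row_le j (v^~ 0); rewrite -fnorm_col_sqnorm v1 mulr1.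
Qed.

Lemma gamma1_ge f : sqnorm f = 1 -> \sum_j w j * `|dot (A j) f| ^+ 3 <= gamma1 Om A i.
Proof.
move=> f1; have u1 : fnorm (\col_k f k) = 1.
  by rewrite fnorm_col_sqnorm col_of_funK f1 sqrtr1.
apply: sup_upper_bound; last first.
  by exists (\col_k f k) => //; apply: eq_bigr => j _; rewrite dotv_acol col_of_funK.
split; first by eexists; exists (\col_k f k).
exists (\sum_j w j * C2 ^+ 3) => y [v /= v1 <-].
apply: ler_sum => j _; rewrite dotv_acol ler_wpM2l ?w_ge0 // lerXn2r ?nnegrE ?C2_ge0 //.
by have := abs_dot_row_le j (v^~ 0); rewrite -fnorm_col_sqnorm v1 mulr1.
Qed.

Lemma ZOA_dot f :
  \sum_j w j * (Y i j - b1 (m j)) * dot (A j) f = dot (ZOA b1 Y Om Th As A i 0) f.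
Proof.
rewrite sum_dot_rows; congr dot; apply/funext => k.
by rewrite /ZOA mul_mx_diag mxE; apply: eq_bigr => j _; rewrite !mxE; ring.
Qed.

Lemma B1_dot f :
  \sum_j curv j * bias j * dot (A j) f = dot ((B1 b2 Om Th As A i)^~ 0) f.
Proof.
rewrite sum_dot_rows; congr dot; apply/funext => k.
rewrite /B1 summxE; apply: eq_bigr => j _.
by rewrite [RHS]mxE dotv_bias /curv /acol !mxE.
Qed.

Lemma I1_mulE (u : 'cV[R]_r) : (I1 b2 Om Th As A i *m u)^~ 0 = qmul A curv (u^~ 0).
Proof.
apply/funext => k; rewrite /I1 /qmul mulmx_suml summxE; apply: eq_bigr => j _.
rewrite -scalemxAl [LHS]mxE -mulmxA -/(curv j) -dotv_acol -mulrA; congr (_ * _).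
by rewrite mxE big_ord1 /dotv; congr (_ * _); rewrite /acol !mxE.
Qed.

Lemma sing_val_qform f : sing_val r (I1 b2 Om Th As A i) * sqnorm f <= qform A curv f.
Proof.
apply: (qform_ge_gain curv_ge0) => g g1.
have := @sing_val_le _ _ (I1 b2 Om Th As A i) (\col_k g k).
by rewrite !fnorm_col_sqnorm I1_mulE col_of_funK g1 sqrtr1; apply.
Qed.

Lemma S1_stationary g : (forall k, score g k = 0) -> S1 phi b1 Y Om i (\col_k g k) A = 0.
Proof.
move=> g_crit; apply/matrixP => k l; rewrite (ord1 l) /S1 !mxE summxE -[RHS](mulr0 phi^-1).
congr (_ * _); transitivity (score g k); last exact: g_crit.
rewrite /score; apply: eq_bigr => j _.
by rewrite [LHS]mxE dotv_acol col_of_funK /acol !mxE.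
Qed.

Definition taylor_rem f j :=
  b1 (dot (A j) (fun k => Th i k + f k)) - b1 (m j) - b2 (m j) * (bias j + dot (A j) f).

Lemma kappa_ge0 : 0 <= kappa.
Proof.
apply: le_trans (normr_ge0 (b3 0)) (abs_b3_le_kappa _).
rewrite normr0 mulr_ge0 ?C2_ge0 // addr_ge0 ?(ltW xi_gt0) //.
exact: le_trans (norm2inf_ge0 Th) Th_le.
Qed.

Lemma taylor_rem_le f j : sqnorm f = xi ^+ 2 ->
  `|taylor_rem f j| <= kappa / 2 * (bias j + dot (A j) f) ^+ 2.
Proof.
move=> f_xi.
have th_le : `|dot (A j) (Th i)| <= C2 * C1.
  by apply: le_trans (abs_dot_row_le j _) _; rewrite ler_wpM2l ?C2_ge0 ?sqnorm_theta_le.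
have f_le : `|dot (A j) f| <= C2 * xi.
  by have := abs_dot_row_le j f; rewrite f_xi sqrtr_sqr (gtr0_norm xi_gt0).
have C2xi : 0 <= C2 * xi by rewrite mulr_ge0 ?C2_ge0 ?ltW.
rewrite /taylor_rem dotDr.
rewrite (_ : bias j + _ = dot (A j) (Th i) + dot (A j) f - m j); last first.
  by rewrite dot_row_theta; ring.
apply: (taylor_remainder_le b1_b2 b2_b3 abs_b3_le_kappa); rewrite mulrDr.
  by apply: le_trans (ler_normD _ _) _; exact: lerD.
by apply: le_trans (abs_Mstar_le j) _; rewrite lerDl.
Qed.

Lemma taylor_rem_sum_le f : sqnorm f = xi ^+ 2 ->
  `|\sum_j w j * taylor_rem f j * dot (A j) f|
    <= kappa * (xi * beta1 Om Th As A i + xi ^+ 3 * gamma1 Om A i).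
Proof.
move=> f_xi; pose u k := xi^-1 * f k.
have u1 : sqnorm u = 1 by rewrite sqnormZ f_xi exprVn mulVf // expf_neq0 // gt_eqF.
have f_u j : `|dot (A j) f| = xi * `|dot (A j) u|.
  by rewrite dotZr normrM gtr0_norm ?invr_gt0 // mulrA mulfV ?mul1r // gt_eqF.
apply: le_trans (ler_norm_sum _ _ _) _.
apply: (@le_trans _ _
  (\sum_j w j * (kappa * (bias j ^+ 2 * `|dot (A j) f| + `|dot (A j) f| ^+ 3)))).
  apply: ler_sum => j _; rewrite !normrM ger0_norm ?w_ge0 // -mulrA ler_wpM2l ?w_ge0 //.
  set s := dot (A j) f; set e := bias j.
  (* splitting (e + s)^2 <= 2 (e^2 + s^2) yields the beta_1 and gamma_1 terms *)
  have es : (e + s) ^+ 2 <= 2 * (e ^+ 2 + `|s| ^+ 2).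
    by rewrite real_normK ?num_real //; have := sqr_ge0 (e - s); lra.
  apply: le_trans (ler_wpM2r (normr_ge0 s) (taylor_rem_le j f_xi)) _.
  have := ler_wpM2l (divr_ge0 kappa_ge0 (ler0n _ 2)) es.
  have := normr_ge0 s; have := kappa_ge0; rewrite exprS; nra.
rewrite (_ : \sum_j _ = kappa * (xi * \sum_j w j * bias j ^+ 2 * `|dot (A j) u|
                           + xi ^+ 3 * \sum_j w j * `|dot (A j) u| ^+ 3)); last first.
  rewrite mulrDr !mulr_sumr -big_split; apply: eq_bigr => j _ /=; rewrite f_u; ring.
by rewrite ler_wpM2l ?kappa_ge0 // lerD // ler_wpM2l ?exprn_ge0 ?(ltW xi_gt0)
  ?(beta1_ge u1) ?(gamma1_ge u1).
Qed.

Hypothesis sr_gt0 : 0 < sing_val r (I1 b2 Om Th As A i).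
Hypothesis small_bias : 2 * (sing_val r (I1 b2 Om Th As A i))^-1 *
  (fnorm (ZOA b1 Y Om Th As A i) + fnorm (B1 b2 Om Th As A i) + beta1 Om Th As A i * kappa) <= xi.
Hypothesis small_curv : 2 * gamma1 Om A i * kappa = 0 \/
  xi <= sing_val r (I1 b2 Om Th As A i) / (2 * gamma1 Om A i * kappa).

Lemma score_dot_sphere_le0 f : sqnorm f = xi ^+ 2 -> dot (score (fun k => Th i k + f k)) f <= 0.
Proof.
move=> f_xi; have sqrt_f : Num.sqrt (sqnorm f) = xi by rewrite f_xi sqrtr_sqr gtr0_norm.
have -> : dot (score (fun k => Th i k + f k)) f =
    \sum_j w j * (Y i j - b1 (m j)) * dot (A j) f - \sum_j curv j * bias j * dot (A j) f
    - qform A curv f - \sum_j w j * taylor_rem f j * dot (A j) f.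
  by rewrite dot_score /qform -!sumrB; apply: eq_bigr => j _; rewrite /taylor_rem /curv; ring.
rewrite ZOA_dot B1_dot.
have Z_le := cauchy_schwarz_sqrt (ZOA b1 Y Om Th As A i 0) f.
have B_le := cauchy_schwarz_sqrt ((B1 b2 Om Th As A i)^~ 0) f.
rewrite -fnorm_rV_sqnorm sqrt_f ler_norml in Z_le.
rewrite -fnorm_col_sqnorm sqrt_f ler_norml in B_le.
have Q_ge := sing_val_qform f; rewrite f_xi in Q_ge.
have := taylor_rem_sum_le f_xi; rewrite ler_norml.
have := radius_conditions_le sr_gt0 xi_gt0 small_bias small_curv.
move: Z_le B_le => /andP[_ ?] /andP[? _]; lra.
Qed.

Lemma score_root_in_ball :
  exists tht : 'cV[R]_r, fnorm (tht - thcol Th i) <= xi /\ S1 phi b1 Y Om i tht A = 0.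
Proof.
have [g g_ball g_crit] :=
  ball_argmax_stationary xi_gt0 continuous_loglik loglik_grad score_dot_sphere_le0.
exists (\col_k g k); split; last exact: S1_stationary.
rewrite (_ : _ - _ = \col_k (g k - Th i k)); last by apply/matrixP => k l; rewrite (ord1 l) !mxE.
by rewrite fnorm_col_sqnorm col_of_funK -(gtr0_norm xi_gt0) -sqrtr_sqr ler_sqrt ?sqr_ge0.
Qed.

End ScoreEquation.

Theorem mainTheorem9 (R : realType) (n p r : nat)
  (phi : R) (b b1 b2 b3 : R -> R)
  (Y : 'M[R]_(n, p)) (Om : 'M[bool]_(n, p))
  (Th : 'M[R]_(n, r)) (As A : 'M[R]_(p, r)) (i : 'I_n) (C1 C2 : R) :
  0 < phi ->
  (* b is three times continuously differentiable, b1 = b', b2 = b'', b3 = b''' *)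
  (forall x : R, is_derive x 1 b (b1 x)) ->
  (forall x : R, is_derive x 1 b1 (b2 x)) ->
  (forall x : R, is_derive x 1 b2 (b3 x)) ->
  continuous b3 ->
  (forall x : R, 0 < b2 x) ->
  norm2inf Th <= C1 ->
  norm2inf As <= C2 ->
  norm2inf A <= C2 ->
  0 < sing_val r (I1 b2 Om Th As A i) ->
  forall xi : R, 0 < xi ->
  let sr := sing_val r (I1 b2 Om Th As A i) in
  let k3 := kappa3 b3 (C2 * (C1 + xi)) in
  2 * sr^-1 * (fnorm (ZOA b1 Y Om Th As A i) + fnorm (B1 b2 Om Th As A i)
               + beta1 Om Th As A i * k3) <= xi ->
  (2 * gamma1 Om A i * k3 = 0 \/ xi <= sr / (2 * gamma1 Om A i * k3)) ->
  exists tht : 'cV[R]_r,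
    fnorm (tht - thcol Th i) <= xi /\ S1 phi b1 Y Om i tht A = 0.
Proof.
move=> _ b_b1 b1_b2 b2_b3 b3_cont b2_gt0 Th_le As_le A_le sr_gt0 xi xi_gt0 sr k3.
exact: score_root_in_ball.
Qed.
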